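(* Let $\mathbf{A}\in\mathbb{R}^{n\times n}$ be symmetric positive definite with (2-norm) condition number $\kappa$, let $\mathbf{y}\in\mathbb{R}^n$, and let $\mathbf{x}=\mathbf{A}^{-1}\mathbf{y}$. Let $\{\mathbf{x}_i\}_{i=0}^n$ be the iterates of the conjugate gradient (CG) method applied to $\mathbf{A}\mathbf{x}=\mathbf{y}$ with initial guess $\mathbf{x}_0=0$. Let $1\le i_{\min}<i_{\max}\le n$ be integers and let $Q$ be a random variable supported on $\{i_{\min},\dots,i_{\max}\}$ with $\mathbb{P}(Q=j)>0$ for each $j$ in this set. Define the TSS-Solve estimator \[ \widetilde{\mathbf{x}}_{\mathrm{tss}}=\frac{\mathbf{x}_Q-\mathbf{x}_{Q-1}}{\mathbb{P}(Q)}+\mathbf{x}_{i_{\min}-1}, \] where $\mathbb{P}(Q)$ denotes $\mathbb{P}(Q=j)$ at the realized value $j$ of $Q$. Then \[ \mathbb{E}\big[\widetilde{\mathbf{x}}_{\mathrm{tss}}\big]=\mathbf{x}_{i_{\max}} \qquad\text{and}\qquad \mathrm{Var}\big(\widetilde{\mathbf{x}}_{\mathrm{tss}}\big)\le 16\,\kappa^2\,\|\mathbf{x}\|^2\,\Gamma, \] where \[ \Gamma:=\sum_{j=i_{\min}}^{i_{\max}}\frac{\varrho^{2(j-1)}}{\mathbb{P}(Q=j)},\qquad \varrho:=\frac{\sqrt{\kappa}-1}{\sqrt{\kappa}+1}\in[0,1). \]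
   Context: CG is the standard conjugate gradient method in exact arithmetic: with $\mathbf{r}_0=\mathbf{y}-\mathbf{A}\mathbf{x}_0$, $\mathbf{p}_0=\mathbf{r}_0$, and for $j\ge0$: $\alpha_j=\mathbf{r}_j^\top\mathbf{r}_j/(\mathbf{p}_j^\top\mathbf{A}\mathbf{p}_j)$, $\mathbf{x}_{j+1}=\mathbf{x}_j+\alpha_j\mathbf{p}_j$, $\mathbf{r}_{j+1}=\mathbf{r}_j-\alpha_j\mathbf{A}\mathbf{p}_j$, $\beta_j=\mathbf{r}_{j+1}^\top\mathbf{r}_{j+1}/(\mathbf{r}_j^\top\mathbf{r}_j)$, $\mathbf{p}_{j+1}=\mathbf{r}_{j+1}+\beta_j\mathbf{p}_j$ (once the residual vanishes, subsequent iterates equal the exact solution). $\|\cdot\|$ is the Euclidean norm, and for a vector-valued random variable $X$, $\mathrm{Var}(X):=\mathbb{E}\|X-\mathbb{E}X\|^2$. *)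

From HB Require Import structures.
From mathcomp Require Import all_boot all_order all_algebra.
From mathcomp Require Import classical_sets reals.
Set Implicit Arguments. Unset Strict Implicit. Unset Printing Implicit Defensive.
Import Order.TTheory GRing.Theory Num.Theory.
Local Open Scope ring_scope.
Local Open Scope classical_set_scope.

Section CGDefs.
Variable R : realType.

Definition dotv n (u v : 'cV[R]_n) : R := (u^T *m v) 0 0.
Definition normv n (u : 'cV[R]_n) : R := Num.sqrt (dotv u u).

Definition spd n (A : 'M[R]_n) : Prop :=
  A^T = A /\ forall v : 'cV[R]_n, v != 0 -> 0 < dotv v (A *m v).

Definition opnorm2 n (A : 'M[R]_n) : R :=
  sup [set r | exists v : 'cV[R]_n, normv v = 1 /\ r = normv (A *m v)].
Definition cond2 n (A : 'M[R]_n) : R := opnorm2 A * opnorm2 (invmx A).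

Definition cg_step n (A : 'M[R]_n) (s : 'cV[R]_n * 'cV[R]_n * 'cV[R]_n)
  : 'cV[R]_n * 'cV[R]_n * 'cV[R]_n :=
  let: (x, r, p) := s in
  if r == 0 then s else
  let alpha := dotv r r / dotv p (A *m p) in
  let x' := x + alpha *: p in
  let r' := r - alpha *: (A *m p) in
  let beta := dotv r' r' / dotv r r in
  (x', r', r' + beta *: p).

Definition cg_state n (A : 'M[R]_n) (y x0 : 'cV[R]_n) (j : nat) :=
  iter j (cg_step A) (x0, y - A *m x0, y - A *m x0).

Definition cg_iter n (A : 'M[R]_n) (y : 'cV[R]_n) (j : nat) : 'cV[R]_n :=
  (cg_state A y 0 j).1.1.

(* TSS-Solve estimator evaluated at realization Q = j, law p of Q *)
Definition tss n (A : 'M[R]_n) (y : 'cV[R]_n) (p : nat -> R) (imin j : nat)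
  : 'cV[R]_n :=
  (p j)^-1 *: (cg_iter A y j - cg_iter A y j.-1) + cg_iter A y imin.-1.

(* expectation / variance of a vector-valued function of Q, whose law p is
   supported on {imin, ..., imax} *)
Definition expect n (p : nat -> R) (imin imax : nat) (X : nat -> 'cV[R]_n)
  : 'cV[R]_n := \sum_(imin <= j < imax.+1) p j *: X j.
Definition variance n (p : nat -> R) (imin imax : nat) (X : nat -> 'cV[R]_n)
  : R := \sum_(imin <= j < imax.+1) p j * normv (X j - expect p imin imax X) ^+ 2.

End CGDefs.

(* Unbiasedness: the weights p_j cancel and sum_j (x_j - x_(j-1)) telescopes to
   x_imax - x_(imin-1).  Variance: it is at most sum_j |x_j - x_(j-1)|^2 / p_j, and
   each increment is bounded through the classical CG estimate
   |x - x_j|^2 <= 4 kappa rho^(2j) |x|^2.  That estimate combines the optimality of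
   CG in the A-norm over the Krylov space (an invariant of the recurrence) with a
   Chebyshev polynomial of the affine map M sending the spectrum of A into
   [1 - kappa, kappa - 1].  No diagonalisation is needed: |M|_A <= kappa - 1 follows
   from the quadratic-form bounds of A by polarization, and the Chebyshev bound
   from Pell's identity H^2 + (c^2 - M^2) G^2 = c^(2k). *)

From HB Require Import structures.
From mathcomp Require Import all_boot all_order all_algebra.
From mathcomp Require Import classical_sets reals.
From mathcomp Require Import ring lra.
Import Order.TTheory GRing.Theory Num.Theory.
Set Implicit Arguments. Unset Strict Implicit. Unset Printing Implicit Defensive.
Local Open Scope ring_scope.

Notation anorm2 A w := (dotv w (A *m w)).

Section Dotv.
Variables (R : realType) (n : nat).
Implicit Types (u v w : 'cV[R]_n) (B : 'M[R]_n).

Lemma dotvE u v : dotv u v = \sum_i u i 0 * v i 0.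
Proof. by rewrite /dotv !mxE; apply: eq_bigr => i _; rewrite mxE. Qed.

Lemma dotvC u v : dotv u v = dotv v u.
Proof. by rewrite !dotvE; apply: eq_bigr => i _; rewrite mulrC. Qed.

Lemma dotvDl u v w : dotv (u + v) w = dotv u w + dotv v w.
Proof. by rewrite !dotvE -big_split; apply: eq_bigr => i _; rewrite mxE mulrDl. Qed.

Lemma dotvZl (a : R) u v : dotv (a *: u) v = a * dotv u v.
Proof. by rewrite !dotvE mulr_sumr; apply: eq_bigr => i _; rewrite mxE mulrA. Qed.

Lemma dotvNl u v : dotv (- u) v = - dotv u v.
Proof. by rewrite -scaleN1r dotvZl mulN1r. Qed.

Lemma dotvBl u v w : dotv (u - v) w = dotv u w - dotv v w.
Proof. by rewrite dotvDl dotvNl. Qed.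

Lemma dotv0l v : dotv 0 v = 0.
Proof. by rewrite -(scale0r 0) dotvZl mul0r. Qed.

Lemma dotvDr u v w : dotv u (v + w) = dotv u v + dotv u w.
Proof. by rewrite dotvC dotvDl !(dotvC u). Qed.

Lemma dotvZr (a : R) u v : dotv u (a *: v) = a * dotv u v.
Proof. by rewrite dotvC dotvZl dotvC. Qed.

Lemma dotvNr u v : dotv u (- v) = - dotv u v.
Proof. by rewrite dotvC dotvNl dotvC. Qed.

Lemma dotvBr u v w : dotv u (v - w) = dotv u v - dotv u w.
Proof. by rewrite dotvDr dotvNr. Qed.

Lemma dotv0r v : dotv v 0 = 0.
Proof. by rewrite dotvC dotv0l. Qed.

Lemma dotv_suml I (r : seq I) (P : pred I) (F : I -> 'cV[R]_n) v :
  dotv (\sum_(i <- r | P i) F i) v = \sum_(i <- r | P i) dotv (F i) v.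
Proof. exact: (big_morph (fun u => dotv u v) (fun a b => dotvDl a b v) (dotv0l v)). Qed.

Lemma dotv_mulmx u B v : dotv u (B *m v) = dotv (B^T *m u) v.
Proof. by rewrite /dotv trmx_mul trmxK mulmxA. Qed.

Lemma dotvv_ge0 v : 0 <= dotv v v.
Proof. by rewrite dotvE; apply: sumr_ge0 => i _; rewrite -expr2 sqr_ge0. Qed.

Lemma coord_sqr_le_dotvv v i : v i 0 ^+ 2 <= dotv v v.
Proof.
rewrite dotvE (bigD1 i) //= -expr2 lerDl.
by apply: sumr_ge0 => j _; rewrite -expr2 sqr_ge0.
Qed.

Lemma dotvv_eq0 v : dotv v v = 0 -> v = 0.
Proof.
move=> vv0; apply/matrixP => i j; rewrite (ord1 j) mxE; apply/eqP.
by rewrite -sqrf_eq0 eq_le sqr_ge0 andbT -vv0 coord_sqr_le_dotvv.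
Qed.

Lemma dotvv_gt0 v : v != 0 -> 0 < dotv v v.
Proof. by move=> vn0; rewrite lt_def dotvv_ge0 andbT; apply: contra_neq vn0 => /dotvv_eq0. Qed.

Lemma dotv_subr_le u v : dotv (u - v) (u - v) <= 2 * dotv u u + 2 * dotv v v.
Proof.
have := dotvv_ge0 (u + v).
rewrite !(dotvDl, dotvDr, dotvNl, dotvNr) (dotvC v u); lra.
Qed.

Lemma sqr_normv v : normv v ^+ 2 = dotv v v.
Proof. by rewrite /normv sqr_sqrtr ?dotvv_ge0. Qed.

Lemma normv_ge0 v : 0 <= normv v.
Proof. exact: sqrtr_ge0. Qed.

Lemma normv0 : normv (0 : 'cV[R]_n) = 0.
Proof. by rewrite /normv dotv0l sqrtr0. Qed.

Lemma normvZ (a : R) v : normv (a *: v) = `|a| * normv v.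
Proof. by rewrite /normv dotvZl dotvZr mulrA -expr2 sqrtrM ?sqr_ge0 // sqrtr_sqr. Qed.

End Dotv.

Lemma quadratic_ge0_discr (R : realFieldType) (a b c : R) : 0 <= c ->
  (forall t, 0 <= a + 2 * b * t + c * t ^+ 2) -> b ^+ 2 <= a * c.
Proof.
move=> c_ge0 q_ge0; have [c_gt0|] := ltrP 0 c.
  have := q_ge0 (- b / c).
  have -> : a + 2 * b * (- b / c) + c * (- b / c) ^+ 2 = (a * c - b ^+ 2) / c.
    by field; rewrite gt_eqF.
  by rewrite pmulr_lge0 ?invr_gt0 // subr_ge0.
move=> c_le0; have c0 : c = 0 by apply/eqP; rewrite eq_le c_le0 c_ge0.
rewrite c0 mulr0 in q_ge0 *; have [-> | b_neq0] := eqVneq b 0; first by rewrite expr0n.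
have := q_ge0 (- (a + 1) / (2 * b)).
have -> : a + 2 * b * (- (a + 1) / (2 * b)) + 0 * (- (a + 1) / (2 * b)) ^+ 2 = -1.
  by field; rewrite b_neq0.
by rewrite ler0N1.
Qed.

Section CauchySchwarz.
Variables (R : realType) (n : nat) (B : 'M[R]_n).
Hypotheses (trB : B^T = B) (B_psd : forall v, 0 <= anorm2 B v).

Lemma dotv_sym_mulmx u v : dotv u (B *m v) = dotv v (B *m u).
Proof. by rewrite dotv_mulmx trB dotvC. Qed.

Lemma form_cauchy_schwarz u v : dotv u (B *m v) ^+ 2 <= anorm2 B u * anorm2 B v.
Proof.
apply: quadratic_ge0_discr => // t; have := B_psd (u + t *: v).
rewrite mulmxDr -scalemxAr dotvDl !dotvDr !dotvZl !dotvZr (dotv_sym_mulmx v u).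
lra.
Qed.

End CauchySchwarz.

Lemma dotv_le_normv (R : realType) n (u v : 'cV[R]_n) :
  dotv u v <= normv u * normv v.
Proof.
have psd1 (w : 'cV[R]_n) : 0 <= anorm2 1%:M w by rewrite mul1mx dotvv_ge0.
have := form_cauchy_schwarz (trmx1 _ _) psd1 u v; rewrite !mul1mx => uv.
rewrite (le_trans (ler_norm _)) // -(@ler_pXn2r _ 2) ?nnegrE ?mulr_ge0 ?normv_ge0 //.
by rewrite real_normK ?num_real // exprMn !sqr_normv.
Qed.

Section OperatorNorm.
Local Open Scope classical_set_scope.
Variables (R : realType) (n : nat) (B : 'M[R]_n).
Implicit Types u v : 'cV[R]_n.

Lemma opnorm2_ubound :
  ubound [set r | exists v, normv v = 1 /\ r = normv (B *m v)] (opnorm2 B).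
Proof.
apply: ub_le_sup; exists (Num.sqrt (\sum_i (\sum_j `|B i j|) ^+ 2)) => _ [v [v1 ->]].
have v_le1 j : `|v j 0| <= 1.
  have := coord_sqr_le_dotvv v j; rewrite -sqr_normv v1 expr1n -real_normK ?num_real //.
  by have := normr_ge0 (v j 0); nra.
rewrite /normv ler_sqrt ?dotvE; last by apply: sumr_ge0 => i _; rewrite sqr_ge0.
apply: ler_sum => i _; rewrite -expr2 -real_normK ?num_real // ler_pXn2r ?nnegrE //.
  rewrite mxE; apply: le_trans (ler_norm_sum _ _ _) _; apply: ler_sum => j _.
  by rewrite normrM ler_piMr.
by apply: sumr_ge0 => j _.
Qed.

Lemma normv_mulmx_le v : normv (B *m v) <= opnorm2 B * normv v.
Proof.
have [->|v_neq0] := eqVneq v 0; first by rewrite mulmx0 normv0 mulr0.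
have v_gt0 : 0 < normv v by rewrite sqrtr_gt0 dotvv_gt0.
have : normv (B *m ((normv v)^-1 *: v)) <= opnorm2 B.
  apply: opnorm2_ubound; exists ((normv v)^-1 *: v); split => //.
  by rewrite normvZ ger0_norm ?invr_ge0 ?ltW // mulVf ?gt_eqF.
by rewrite -scalemxAr normvZ ger0_norm ?invr_ge0 ?normv_ge0 // mulrC ler_pdivrMr.
Qed.

Lemma dotv_mulmx_le v : dotv v (B *m v) <= opnorm2 B * dotv v v.
Proof.
apply: le_trans (dotv_le_normv _ _) _.
rewrite -sqr_normv expr2 mulrCA ler_wpM2l ?normv_ge0 //; exact: normv_mulmx_le.
Qed.

End OperatorNorm.

Lemma const_mx1_neq0 (R : nzRingType) n : const_mx 1 != 0 :> 'cV[R]_n.+1.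
Proof. by apply/eqP => /matrixP /(_ ord0 ord0); rewrite !mxE; apply/eqP/oner_neq0. Qed.

Lemma opnorm2_ge0 (R : realType) n (B : 'M[R]_n.+1) : 0 <= opnorm2 B.
Proof.
have := le_trans (normv_ge0 _) (normv_mulmx_le B (const_mx 1)).
by rewrite pmulr_lge0 // sqrtr_gt0 dotvv_gt0 ?const_mx1_neq0.
Qed.

Section SPD.
Variables (R : realType) (n : nat) (A : 'M[R]_n.+1).
Hypotheses (trA : A^T = A) (A_pos : forall v, v != 0 -> 0 < anorm2 A v).
Implicit Types u v w : 'cV[R]_n.+1.

Lemma anorm2_ge0 v : 0 <= anorm2 A v.
Proof. by have [->|/A_pos/ltW//] := eqVneq v 0; rewrite dotv0l. Qed.

Lemma spd_unitmx : A \in unitmx.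
Proof.
rewrite -row_free_unit; apply: inj_row_free => v vA0.
have Av0 : A *m v^T = 0 by rewrite -trA -trmx_mul vA0 trmx0.
apply/eqP; rewrite -trmx_eq0; apply: contraT => /A_pos.
by rewrite Av0 dotv0r ltxx.
Qed.

Lemma dotv_mulmxl u v : dotv (A *m u) v = dotv u (A *m v).
Proof. by rewrite dotv_mulmx trA dotvC. Qed.

Lemma anorm2_invmx_le u :
  anorm2 A (invmx A *m u) <= opnorm2 (invmx A) * dotv u u.
Proof. by rewrite mulKVmx ?spd_unitmx // dotvC dotv_mulmx_le. Qed.

Lemma anorm2_le_mulmx w : anorm2 A w <= opnorm2 (invmx A) * dotv (A *m w) (A *m w).
Proof. by have := anorm2_invmx_le (A *m w); rewrite mulKmx ?spd_unitmx. Qed.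

(* Cauchy-Schwarz for the A-inner product, with [<w, v>_A]^2 cancelled once. *)
Lemma dotv_le_anorm2 v w c : 0 <= c -> 0 <= dotv w (A *m v) ->
  anorm2 A v <= c * dotv w (A *m v) -> dotv w (A *m v) <= c * anorm2 A w.
Proof.
move=> c_ge0 s_ge0 av_le.
have := form_cauchy_schwarz trA anorm2_ge0 w v.
have := ler_wpM2l (anorm2_ge0 w) av_le.
have := mulr_ge0 c_ge0 (anorm2_ge0 w); nra.
Qed.

Lemma dotv_mulmx_le_anorm2 w : dotv (A *m w) (A *m w) <= opnorm2 A * anorm2 A w.
Proof.
rewrite dotv_mulmxl; apply: dotv_le_anorm2; rewrite ?opnorm2_ge0 //.
  by rewrite -dotv_mulmxl dotvv_ge0.
by rewrite -[dotv w _]dotv_mulmxl dotv_mulmx_le.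
Qed.

Lemma dotvv_le_anorm2 w : dotv w w <= opnorm2 (invmx A) * anorm2 A w.
Proof.
have := anorm2_invmx_le w; rewrite mulKVmx ?spd_unitmx // => inv_le.
have := @dotv_le_anorm2 (invmx A *m w) w _ (opnorm2_ge0 (invmx A)).
by rewrite mulKVmx ?spd_unitmx ?dotvv_ge0 //; apply.
Qed.

Lemma cond2_ge1 : 1 <= cond2 A.
Proof.
have := A_pos (const_mx1_neq0 R n); have := anorm2_le_mulmx (const_mx 1).
have := ler_wpM2l (opnorm2_ge0 (invmx A)) (dotv_mulmx_le_anorm2 (const_mx 1)).
rewrite /cond2; nra.
Qed.

End SPD.

Lemma le_of_polar (R : realFieldType) (a b c : R) : 0 <= c ->
  (forall t, 2 * t * b <= c * (a + t ^+ 2 * b)) -> b <= c ^+ 2 * a.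
Proof.
move=> c_ge0 polar; have [c_gt0|] := ltrP 0 c.
  have : b / c <= c * a.
    have := polar c^-1.
    have -> : c * (a + c^-1 ^+ 2 * b) = c * a + b / c by field; rewrite gt_eqF.
    lra.
  by rewrite ler_pdivrMr // mulrAC -expr2.
move=> c_le0; have := polar 1; have -> : c = 0 by apply/eqP; rewrite eq_le c_le0.
lra.
Qed.

Section SelfAdjoint.
Variables (R : realType) (n : nat) (A P : 'M[R]_n).
Hypothesis trA : A^T = A.
Hypothesis P_selfadj : forall u v, dotv (P *m u) (A *m v) = dotv u (A *m (P *m v)).

Lemma anorm2_selfadj_le c : 0 <= c ->
  (forall w, `|dotv (P *m w) (A *m w)| <= c * anorm2 A w) ->
  forall x, anorm2 A (P *m x) <= c ^+ 2 * anorm2 A x.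
Proof.
move=> c_ge0 form_le x; apply: le_of_polar => // t.
set Px := P *m x; set b := anorm2 A Px.
have e1 := form_le (x + t *: Px); have e2 := form_le (x - t *: Px).
move: e1 e2; rewrite !ler_norml => /andP[_ e1] /andP[e2 _].
rewrite !(mulmxDr, mulmxN, dotvDl, dotvDr, dotvNl, dotvNr) -!scalemxAr in e1 e2.
rewrite -/Px !(dotvZl, dotvZr) (P_selfadj Px x) (dotv_sym_mulmx trA Px x) in e1 e2.
rewrite -/Px -/b in e1 e2; lra.
Qed.

End SelfAdjoint.

Section HornerMx.
Variables (R : realType) (n : nat) (A : 'M[R]_n.+1).
Hypothesis trA : A^T = A.

Lemma horner_mxA p : horner_mx A p *m A = A *m horner_mx A p.
Proof. exact: comm_horner_mx. Qed.

Lemma trmx_horner_mx p : (horner_mx A p)^T = horner_mx A p.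
Proof.
elim/poly_ind: p => [|p c IH]; first by rewrite rmorph0 trmx0.
rewrite rmorphD rmorphM /= horner_mx_X horner_mx_C linearD /= tr_scalar_mx.
by rewrite -mulmxE trmx_mul IH trA horner_mxA.
Qed.

Lemma horner_mx_selfadj p u v :
  dotv (horner_mx A p *m u) (A *m v) = dotv u (A *m (horner_mx A p *m v)).
Proof.
by rewrite [LHS]dotvC [LHS]dotv_mulmx trmx_horner_mx mulmxA horner_mxA -mulmxA dotvC.
Qed.

End HornerMx.

(* [cheb m c2 k = (H, G)] with [H + d G = (m + d) ^+ k] whenever [d ^+ 2 = m ^+ 2 - c2];
   thus H is [sqrt c2 ^+ k] times the Chebyshev polynomial [T_k] at [m / sqrt c2]. *)
Definition cheb_step (T : comNzRingType) (m c2 : T) (hg : T * T) : T * T :=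
  (m * hg.1 + (m ^+ 2 - c2) * hg.2, hg.1 + m * hg.2).

Definition cheb (T : comNzRingType) (m c2 : T) (k : nat) : T * T :=
  iter k (cheb_step m c2) (1, 0).

Lemma cheb_pell (T : comNzRingType) (m c2 : T) k :
  (cheb m c2 k).1 ^+ 2 + (c2 - m ^+ 2) * (cheb m c2 k).2 ^+ 2 = c2 ^+ k.
Proof.
elim: k => [|k IH]; first by rewrite expr1n expr0n /= mulr0 addr0.
by rewrite /cheb iterS -/(cheb m c2 k) [c2 ^+ k.+1]exprS -IH /cheb_step /=; ring.
Qed.

Lemma cheb_add_sqrt (T : comNzRingType) (m c2 d : T) k : d ^+ 2 = m ^+ 2 - c2 ->
  (cheb m c2 k).1 + d * (cheb m c2 k).2 = (m + d) ^+ k.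
Proof.
move=> dE; elim: k => [|k IH]; first by rewrite mulr0 addr0.
by rewrite /cheb iterS -/(cheb m c2 k) [(m + d) ^+ k.+1]exprS -IH /cheb_step /= -dE; ring.
Qed.

Lemma cheb_rmorph (T S : comNzRingType) (f : {rmorphism T -> S}) m c2 k :
  f (cheb m c2 k).1 = (cheb (f m) (f c2) k).1 /\
  f (cheb m c2 k).2 = (cheb (f m) (f c2) k).2.
Proof.
elim: k => [|k [IH1 IH2]]; first by rewrite /= rmorph1 rmorph0.
rewrite /cheb !iterS -/(cheb m c2 k) -/(cheb (f m) (f c2) k) /cheb_step /=.
by rewrite !rmorphD !rmorphM rmorphB rmorphXn IH1 IH2.
Qed.

Lemma cheb_ge (R : realFieldType) (m c2 d : R) k :
  d ^+ 2 = m ^+ 2 - c2 -> 0 <= m - d -> (m + d) ^+ k / 2 <= (cheb m c2 k).1.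
Proof.
move=> dE md_ge0; have plus := cheb_add_sqrt k dE.
have minus : (cheb m c2 k).1 + (- d) * (cheb m c2 k).2 = (m - d) ^+ k.
  by apply: cheb_add_sqrt; rewrite sqrrN.
have := exprn_ge0 k md_ge0; lra.
Qed.

Lemma poly_of_sizeXM (R : nzRingType) k (p : {poly R}) :
  p \is a poly_of_size k -> 'X * p \is a poly_of_size k.+1.
Proof.
rewrite !qualifE /= => /leq_sizeP p_small; apply/leq_sizeP => -[|j] //= ltkj.
by rewrite coefXM p_small.
Qed.

Lemma poly_of_size_widen (R : nzSemiRingType) k k' (p : {poly R}) :
  p \is a poly_of_size k -> (k <= k')%N -> p \is a poly_of_size k'.
Proof. by rewrite !qualifE /=; apply: leq_trans. Qed.

Section CGChebyshev.
Variables (R : realType) (n : nat) (A : 'M[R]_n.+1).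
Hypotheses (trA : A^T = A) (A_pos : forall v, v != 0 -> 0 < anorm2 A v).
Local Notation kappa := (cond2 A).
Local Notation N := (opnorm2 (invmx A)).
Local Notation hA := (horner_mx A).

(* Maps the spectrum of A, which lies in [1/N, opnorm2 A], into [1 - kappa, kappa - 1]. *)
Definition cg_shift : {poly R} := (kappa + 1)%:P - (2 * N) *: 'X.

Lemma cg_shift_form_le w :
  `|dotv (hA cg_shift *m w) (A *m w)| <= (kappa - 1) * anorm2 A w.
Proof.
rewrite rmorphB /= horner_mxZ horner_mx_C horner_mx_X.
rewrite mulmxBl mul_scalar_mx -scalemxAl dotvBl !dotvZl.
have := anorm2_le_mulmx trA A_pos w.
have := ler_wpM2l (opnorm2_ge0 (invmx A)) (dotv_mulmx_le_anorm2 trA A_pos w).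
by rewrite /cond2 ler_norml => ? ?; apply/andP; split; nra.
Qed.

Lemma anorm2_cg_shift_le w :
  anorm2 A (hA cg_shift *m w) <= (kappa - 1) ^+ 2 * anorm2 A w.
Proof.
apply: (anorm2_selfadj_le trA (horner_mx_selfadj trA cg_shift)).
  by rewrite subr_ge0 cond2_ge1.
exact: cg_shift_form_le.
Qed.

Definition cg_cheb k : {poly R} * {poly R} :=
  cheb cg_shift ((kappa - 1) ^+ 2)%:P k.

(* Pell's identity [H^2 = c2^k - (c2 - shift^2) G^2] and [shift^2 <= c2] in the A-norm. *)
Lemma anorm2_cg_cheb_le k w :
  anorm2 A (hA (cg_cheb k).1 *m w) <= ((kappa - 1) ^+ 2) ^+ k * anorm2 A w.
Proof.
set c2 := (kappa - 1) ^+ 2; set H := (cg_cheb k).1; set G := (cg_cheb k).2.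
set M := hA cg_shift; set v := hA G *m w.
have pell : H * H = (c2 ^+ k)%:P - G * ((c2%:P - cg_shift ^+ 2) * G).
  by rewrite rmorphXn /= -(cheb_pell cg_shift c2%:P k) -/(cg_cheb k) -/H -/G; ring.
have hAHH : hA (H * H) = (c2 ^+ k)%:M - hA G *m ((c2%:M - M *m M) *m hA G).
  rewrite pell rmorphB /= horner_mx_C rmorphM /= rmorphM /= rmorphB /= horner_mx_C.
  by rewrite [cg_shift ^+ 2]expr2 [hA (cg_shift * _)]rmorphM /= -!mulmxE.
have GMMG : dotv w (A *m (hA G *m ((c2%:M - M *m M) *m hA G) *m w))
    = c2 * anorm2 A v - anorm2 A (M *m v).
  rewrite -mulmxA -horner_mx_selfadj // -mulmxA -/v mulmxBl mul_scalar_mx.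
  by rewrite mulmxBr dotvBr -scalemxAr dotvZr -mulmxA /M [in RHS]horner_mx_selfadj.
rewrite horner_mx_selfadj // mulmxA mulmxE -rmorphM /= hAHH mulmxBl mul_scalar_mx.
rewrite mulmxBr dotvBr -scalemxAr dotvZr GMMG.
have := anorm2_cg_shift_le v; rewrite -/M -/c2; lra.
Qed.

Lemma cg_shift_sizeM k p :
  p \is a poly_of_size k -> cg_shift * p \is a poly_of_size k.+1.
Proof.
move=> p_small; rewrite mulrBl mul_polyC -scalerAl rpredB ?rpredZ ?poly_of_sizeXM //.
exact: poly_of_size_widen p_small (leqnSn k).
Qed.

Lemma size_cg_cheb k :
  (cg_cheb k).1 \is a poly_of_size k.+1 /\ (cg_cheb k).2 \is a poly_of_size k.
Proof.
elim: k => [|k [H_small G_small]]; first by rewrite !qualifE /= size_poly1 size_poly0.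
rewrite /cg_cheb /cheb iterS -/(cheb cg_shift _ k) -/(cg_cheb k) /cheb_step /=; split.
  rewrite [(cg_shift ^+ 2 - _) * _]mulrBl [cg_shift ^+ 2]expr2 -mulrA mul_polyC.
  rewrite rpredD ?rpredB ?rpredZ ?cg_shift_sizeM //.
  exact: poly_of_size_widen G_small (leqW (leqnSn k)).
by rewrite rpredD ?cg_shift_sizeM // (poly_of_size_widen H_small).
Qed.

Lemma horner0_cg_cheb k :
  (cg_cheb k).1.[0] = (cheb (kappa + 1) ((kappa - 1) ^+ 2) k).1.
Proof.
rewrite /cg_cheb -horner_evalE.
have [-> _] := cheb_rmorph (horner_eval (0 : R)) cg_shift ((kappa - 1) ^+ 2)%:P k.
congr (cheb _ _ k).1; last exact: hornerC.
by change (cg_shift.[0] = kappa + 1); rewrite /cg_shift !hornerE subr0.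
Qed.

End CGChebyshev.

Section Krylov.
Variables (R : realType) (n : nat) (A : 'M[R]_n.+1) (y : 'cV[R]_n.+1).
Local Notation hA := (horner_mx A).
Implicit Types u v w : 'cV[R]_n.+1.

Definition krylov k v := exists2 s : {poly R}, s \is a poly_of_size k & v = hA s *m y.

Definition krylov_orth k r := forall v, krylov k v -> dotv r v = 0.

Lemma krylov0 k : krylov k 0.
Proof. by exists 0; rewrite ?rpred0 // rmorph0 mul0mx. Qed.

Lemma krylov_widen k k' v : krylov k v -> (k <= k')%N -> krylov k' v.
Proof. by move=> [s s_small ->] le_kk'; exists s; rewrite ?(poly_of_size_widen s_small). Qed.

Lemma krylovD k u v : krylov k u -> krylov k v -> krylov k (u + v).
Proof. by move=> [s ? ->] [t ? ->]; exists (s + t); rewrite ?rpredD // rmorphD mulmxDl. Qed.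

Lemma krylovZ k (c : R) v : krylov k v -> krylov k (c *: v).
Proof. by move=> [s ? ->]; exists (c *: s); rewrite ?rpredZ // horner_mxZ scalemxAl. Qed.

Lemma krylovB k u v : krylov k u -> krylov k v -> krylov k (u - v).
Proof. by move=> ku kv; rewrite -scaleN1r; apply/krylovD/krylovZ. Qed.

Lemma krylov_mulmx k v : krylov k v -> krylov k.+1 (A *m v).
Proof.
move=> [s ? ->]; exists ('X * s); rewrite ?poly_of_sizeXM //.
by rewrite rmorphM /= horner_mx_X -mulmxE mulmxA.
Qed.

Lemma krylov_rhs k : (0 < k)%N -> krylov k y.
Proof. by exists 1; rewrite ?rmorph1 ?mul1mx // qualifE /= size_poly1. Qed.

Lemma krylov0_eq0 v : krylov 0 v -> v = 0.
Proof. by move=> [s]; rewrite qualifE /= leqn0 size_poly_eq0 => /eqP -> ->; rewrite rmorph0 mul0mx. Qed.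

Lemma krylov_decomp k r v : krylov k.+1 r -> krylov_orth k r -> r != 0 ->
  krylov k.+1 v -> exists c w, krylov k w /\ v = c *: r + w.
Proof.
move=> [t t_small rE] r_orth r_neq0 [s s_small vE].
have t_top : t`_k != 0.
  apply: contra_neq r_neq0 => t_top0; apply: dotvv_eq0; apply: r_orth.
  exists t => //; rewrite qualifE; apply/leq_sizeP => j; rewrite leq_eqVlt.
  by case/orP => [/eqP <- // | ltkj]; move: t_small; rewrite qualifE => /leq_sizeP->.
set c := s`_k / t`_k; exists c, (hA (s - c *: t) *m y); split.
  exists (s - c *: t) => //; rewrite qualifE; apply/leq_sizeP => j.
  rewrite leq_eqVlt coefB coefZ => /orP[/eqP <- | ltkj]; first by rewrite divfK ?subrr.
  by move: s_small t_small; rewrite !qualifE => /leq_sizeP-> // /leq_sizeP->; rewrite // mulr0 subrr.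
by rewrite rmorphB /= horner_mxZ mulmxBl -scalemxAl -rE vE addrC subrK.
Qed.

End Krylov.

Section CGInvariant.
Variables (R : realType) (n : nat) (A : 'M[R]_n.+1) (y : 'cV[R]_n.+1).
Hypotheses (trA : A^T = A) (A_pos : forall v, v != 0 -> 0 < anorm2 A v).
Implicit Types x r p v w : 'cV[R]_n.+1.
Local Notation krylov := (krylov A y).
Local Notation krylov_orth := (krylov_orth A y).

Record cg_invariant k x r p : Prop := CGInvariant {
  cg_iterate_krylov : krylov k x;
  cg_residualE : r = y - A *m x;
  cg_direction_krylov : krylov k (p - r);
  cg_residual_orth : krylov_orth k r;
  cg_direction_conj : forall v, krylov k v -> dotv (A *m p) v = 0;
  cg_direction_eq0 : r = 0 -> p = 0 }.

Lemma cg_invariant0 : cg_invariant 0 0 (y - A *m 0) (y - A *m 0).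
Proof.
split=> //; rewrite ?subrr; try exact: krylov0.
  by move=> v /krylov0_eq0 ->; rewrite dotv0r.
by move=> v /krylov0_eq0 ->; rewrite dotv0r.
Qed.

Section Step.
Variables (k : nat) (x r p : 'cV[R]_n.+1).
Hypotheses (inv : cg_invariant k x r p) (r_neq0 : r != 0).

Let alpha := dotv r r / anorm2 A p.
Let r' := r - alpha *: (A *m p).
Let beta := dotv r' r' / dotv r r.

Lemma cg_residual_krylov : krylov k.+1 r.
Proof.
rewrite (cg_residualE inv); apply: krylovB; first exact: krylov_rhs.
exact/krylov_mulmx/(cg_iterate_krylov inv).
Qed.

Lemma cg_direction_krylovS : krylov k.+1 p.
Proof.
rewrite -(subrK r p); apply: krylovD cg_residual_krylov.
exact: krylov_widen (cg_direction_krylov inv) (leqnSn k).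
Qed.

Lemma dotv_residual_direction : dotv r p = dotv r r.
Proof.
by rewrite -(subrK r p) dotvDr (cg_residual_orth inv (cg_direction_krylov inv)) add0r.
Qed.

Lemma dotv_direction_residual : dotv (A *m p) r = anorm2 A p.
Proof.
rewrite -[r in LHS](subKr p) dotvBr (cg_direction_conj inv (cg_direction_krylov inv)).
by rewrite subr0 dotv_mulmxl.
Qed.

Lemma cg_anorm2_direction_gt0 : 0 < anorm2 A p.
Proof.
apply: A_pos; apply: contra_neq r_neq0 => p0; apply: dotvv_eq0.
by rewrite -dotv_residual_direction p0 dotv0r.
Qed.

Lemma cg_residual_orthS : krylov_orth k.+1 r'.
Proof.
have r'_orth w : krylov k w -> dotv r' w = 0.
  move=> kw; rewrite dotvBl dotvZl (cg_residual_orth inv kw).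
  by rewrite (cg_direction_conj inv kw) mulr0 subrr.
have r'r : dotv r' r = 0.
  by rewrite dotvBl dotvZl dotv_direction_residual divfK ?subrr ?gt_eqF ?cg_anorm2_direction_gt0.
move=> v /(krylov_decomp cg_residual_krylov (cg_residual_orth inv) r_neq0) [c [w [kw ->]]].
by rewrite dotvDr dotvZr r'r r'_orth // mulr0 addr0.
Qed.

Lemma cg_direction_conjS v : krylov k.+1 v -> dotv (A *m (r' + beta *: p)) v = 0.
Proof.
move=> /(krylov_decomp cg_residual_krylov (cg_residual_orth inv) r_neq0) [c [w [kw ->]]].
have alpha_neq0 : alpha != 0 by rewrite mulf_neq0 ?invr_eq0 ?gt_eqF ?dotvv_gt0 ?cg_anorm2_direction_gt0.
have Ar'_r : dotv (A *m r') r = - dotv r' r' / alpha.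
  rewrite (dotv_mulmxl trA) -[r in A *m r](subKr p) mulmxBr dotvBr.
  rewrite (cg_residual_orthS (krylov_mulmx (cg_direction_krylov inv))) subr0.
  have -> : A *m p = alpha^-1 *: (r - r') by rewrite opprB addrC subrK scalerA mulVf ?scale1r.
  rewrite dotvZr dotvBr (cg_residual_orthS cg_residual_krylov) sub0r.
  by rewrite mulrC.
rewrite mulmxDr -scalemxAr !dotvDl !dotvDr !dotvZl !dotvZr.
rewrite [dotv (A *m r') w](dotv_mulmxl trA) (cg_residual_orthS (krylov_mulmx kw)).
rewrite (cg_direction_conj inv kw) dotv_direction_residual Ar'_r /beta /alpha.
by field; rewrite !gt_eqF ?dotvv_gt0 ?cg_anorm2_direction_gt0.
Qed.

End Step.

Lemma cg_invariant_step k x r p : cg_invariant k x r p ->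
  let s := cg_step A (x, r, p) in cg_invariant k.+1 s.1.1 s.1.2 s.2.
Proof.
move=> inv /=; have [r0 | r_neq0] := eqVneq r 0.
  have p0 := cg_direction_eq0 inv r0; rewrite r0 p0 /=; split => //.
  - exact: krylov_widen (cg_iterate_krylov inv) (leqnSn k).
  - by rewrite -(cg_residualE inv) r0.
  - by rewrite subrr; apply: krylov0.
  - by move=> v _; rewrite dotv0l.
  - by move=> v _; rewrite mulmx0 dotv0l.
rewrite /=; split.
- apply: krylovD; first exact: krylov_widen (cg_iterate_krylov inv) (leqnSn k).
  exact/krylovZ/(cg_direction_krylovS inv).
- by rewrite {1}(cg_residualE inv) mulmxDr -scalemxAr opprD addrA.
- by rewrite addrC addKr; apply/krylovZ/(cg_direction_krylovS inv).
- exact: cg_residual_orthS inv r_neq0.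
- exact: cg_direction_conjS inv r_neq0.
- by move=> r'0; rewrite r'0 dotv0l mul0r scale0r addr0.
Qed.

Lemma cg_state_invariant k :
  let s := cg_state A y 0 k in cg_invariant k s.1.1 s.1.2 s.2.
Proof.
elim: k => [|k IH]; first exact: cg_invariant0.
rewrite /cg_state iterS -/(cg_state A y 0 k).
by move: IH; case: (cg_state A y 0 k) => [[x r] p]; apply: cg_invariant_step.
Qed.

Lemma cg_iter_optimal k z : krylov k z ->
  anorm2 A (invmx A *m y - cg_iter A y k) <= anorm2 A (invmx A *m y - z).
Proof.
move=> kz; have := cg_state_invariant k; rewrite /cg_iter.
case: (cg_state A y 0 k) => [[x r] p] /= inv.
set e := invmx A *m y - x; set w := x - z.
have Ae : A *m e = r by rewrite mulmxBr mulKVmx ?spd_unitmx // (cg_residualE inv).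
have wr : dotv w r = 0.
  by rewrite dotvC; apply/(cg_residual_orth inv)/krylovB/kz/(cg_iterate_krylov inv).
have -> : invmx A *m y - z = e + w by rewrite addrA subrK.
clearbody e w; rewrite mulmxDr !dotvDl !dotvDr Ae (dotv_sym_mulmx trA e w) Ae wr.
have := anorm2_ge0 A_pos w; lra.
Qed.

End CGInvariant.

Section CGConvergence.
Variables (R : realType) (n : nat) (A : 'M[R]_n.+1) (y : 'cV[R]_n.+1).
Hypotheses (trA : A^T = A) (A_pos : forall v, v != 0 -> 0 < anorm2 A v).
Local Notation kappa := (cond2 A).
Local Notation xs := (invmx A *m y).
Local Notation hA := (horner_mx A).
Local Notation f := (cg_iter A y).

Definition cg_rate : R := (Num.sqrt kappa - 1) / (Num.sqrt kappa + 1).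

Lemma cond2_ge0 : 0 <= kappa.
Proof. exact: le_trans ler01 (cond2_ge1 trA A_pos). Qed.

Lemma sqr_sqrt_cond2 : Num.sqrt kappa ^+ 2 = kappa.
Proof. exact: sqr_sqrtr cond2_ge0. Qed.

Lemma sqrt_cond2_ge1 : 1 <= Num.sqrt kappa.
Proof. by rewrite -sqrtr1 ler_sqrt ?cond2_ge1 ?cond2_ge0. Qed.

Lemma cg_rate_ge0 : 0 <= cg_rate.
Proof. by have := sqrt_cond2_ge1; rewrite /cg_rate => ?; rewrite divr_ge0 //; lra. Qed.

Lemma cg_rate_le1 : cg_rate <= 1.
Proof. by have := sqrt_cond2_ge1; rewrite /cg_rate => ?; rewrite ler_pdivrMr; lra. Qed.

Lemma cg_iter_poly_optimal k q : q \is a poly_of_size k.+1 -> q.[0] = 1 ->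
  anorm2 A (xs - f k) <= anorm2 A (hA q *m xs).
Proof.
move=> q_small q0; set s := - drop_poly 1 q.
have qE : q = 1 - 'X * s.
  apply/polyP => -[|j]; rewrite coefB coefXM coef1 /=; first by rewrite -horner_coef0 q0 subr0.
  by rewrite coefN coef_drop_poly addn1 opprK mulr0n add0r.
have -> : hA q *m xs = xs - hA s *m y.
  rewrite qE rmorphB rmorph1 rmorphM /= horner_mx_X mulmxBl mul1mx -mulmxE.
  by rewrite -horner_mxA -mulmxA mulKVmx ?spd_unitmx.
apply: (cg_iter_optimal trA A_pos); exists s => //.
rewrite qualifE /= size_polyN; apply: leq_trans (eq_leq (size_drop_poly 1 q)) _.
by rewrite leq_subLR add1n.
Qed.

Lemma cg_cheb_horner0_ge k :
  ((Num.sqrt kappa + 1) ^+ 2) ^+ k / 2 <= (cg_cheb A k).1.[0].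
Proof.
rewrite horner0_cg_cheb; set s := Num.sqrt kappa.
rewrite -[kappa]sqr_sqrt_cond2 -/s (_ : (s + 1) ^+ 2 = s ^+ 2 + 1 + 2 * s); last by ring.
apply: cheb_ge; first by ring.
by rewrite (_ : _ - _ = (s - 1) ^+ 2) ?sqr_ge0 //; ring.
Qed.

(* Take [q = H / H(0)] for the Chebyshev-type polynomial H of [cg_cheb]. *)
Lemma cg_anorm2_err_le k :
  anorm2 A (xs - f k) <= 4 * cg_rate ^+ (2 * k) * anorm2 A xs.
Proof.
set s := Num.sqrt kappa; set H := (cg_cheb A k).1; set H0 := H.[0].
set X := ((s + 1) ^+ 2) ^+ k; set Y := ((s - 1) ^+ 2) ^+ k.
have s_ge1 : 1 <= s := sqrt_cond2_ge1.
have X_gt0 : 0 < X by rewrite !exprn_gt0 //; lra.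
have Y_ge0 : 0 <= Y by rewrite exprn_ge0 ?sqr_ge0.
have H0_ge : X / 2 <= H0 := cg_cheb_horner0_ge k.
have H0_gt0 : 0 < H0 by apply: lt_le_trans H0_ge; rewrite divr_gt0.
have invH0_le : H0^-1 <= 2 / X.
  by rewrite -[2 / X]invrK lef_pV2 ?posrE ?invr_gt0 ?divr_gt0 // invf_div.
apply: le_trans (cg_iter_poly_optimal (q := H0^-1 *: H) _ _) _.
- by rewrite rpredZ // (size_cg_cheb A k).1.
- by rewrite hornerZ mulVf ?gt_eqF.
rewrite horner_mxZ -scalemxAl -scalemxAr dotvZl dotvZr mulrA.
apply: le_trans (ler_wpM2l _ (anorm2_cg_cheb_le trA A_pos k xs)) _.
  by rewrite mulr_ge0 ?invr_ge0 ?ltW.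
rewrite mulrA ler_wpM2r ?(anorm2_ge0 A_pos) //.
have -> : ((kappa - 1) ^+ 2) ^+ k = Y * X.
  by rewrite -[kappa]sqr_sqrt_cond2 -/s -exprMn; congr (_ ^+ k); ring.
have -> : cg_rate ^+ (2 * k) = Y / X by rewrite exprM !expr_div_n.
apply: le_trans (ler_wpM2r (mulr_ge0 Y_ge0 (ltW X_gt0)) (ler_pM _ _ invH0_le invH0_le)) _.
- by rewrite invr_ge0 ltW.
- by rewrite invr_ge0 ltW.
by rewrite le_eqVlt; apply/orP; left; apply/eqP; field; rewrite gt_eqF.
Qed.

Lemma cg_err_le k :
  dotv (xs - f k) (xs - f k) <= 4 * kappa * cg_rate ^+ (2 * k) * dotv xs xs.
Proof.
have N_ge0 := opnorm2_ge0 (invmx A).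
have c_ge0 : 0 <= 4 * cg_rate ^+ (2 * k) by rewrite mulr_ge0 ?exprn_ge0 ?cg_rate_ge0.
apply: le_trans (dotvv_le_anorm2 trA A_pos _) _.
apply: le_trans (ler_wpM2l N_ge0 (cg_anorm2_err_le k)) _.
have := ler_wpM2l (mulr_ge0 N_ge0 c_ge0) (dotv_mulmx_le A xs).
rewrite /cond2; lra.
Qed.

Lemma cg_iter_succ_sub_le k :
  dotv (f k.+1 - f k) (f k.+1 - f k) <= 16 * kappa ^+ 2 * cg_rate ^+ (2 * k) * dotv xs xs.
Proof.
have -> : f k.+1 - f k = (xs - f k) - (xs - f k.+1) by rewrite opprB [RHS]addrC addrA subrK.
apply: le_trans (dotv_subr_le _ _) _.
have := cg_err_le k; have := cg_err_le k.+1; rewrite mulnSr exprD.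
set P := cg_rate ^+ (2 * k); set D := dotv xs xs.
have P_ge0 : 0 <= P by rewrite exprn_ge0 ?cg_rate_ge0.
have kappa_ge1 := cond2_ge1 trA A_pos.
have rate2_le1 : cg_rate ^+ 2 <= 1 by rewrite expr_le1 ?cg_rate_ge0 ?cg_rate_le1.
have D_ge0 : 0 <= D := dotvv_ge0 xs.
have kPD_ge0 : 0 <= kappa * P * D by rewrite !mulr_ge0 ?opnorm2_ge0.
have := ler_wpM2l kPD_ge0 rate2_le1.
have kappa_le_sqr : kappa <= kappa ^+ 2 by rewrite expr2 ler_peMl //; lra.
have := ler_wpM2r (mulr_ge0 P_ge0 D_ge0) kappa_le_sqr.
lra.
Qed.

End CGConvergence.

Lemma telescope_sumr_pred (V : zmodType) (f : nat -> V) m M : (0 < m <= M)%N ->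
  \sum_(m <= j < M.+1) (f j - f j.-1) = f M - f m.-1.
Proof. by case: m => // m /= lt_mM; rewrite big_add1 /= telescope_sumr // ltnW. Qed.

Section RandomizedTelescope.
Variables (R : realType) (n : nat) (f : nat -> 'cV[R]_n) (p : nat -> R) (imin imax : nat).
Hypotheses (imin_gt0 : (0 < imin)%N) (le_imin_imax : (imin <= imax)%N).
Hypotheses (p_gt0 : forall j, (imin <= j <= imax)%N -> 0 < p j)
  (p_sum1 : \sum_(imin <= j < imax.+1) p j = 1).
Local Notation X := (fun j => (p j)^-1 *: (f j - f j.-1) + f imin.-1).

Lemma expect_randomized_telescope : expect p imin imax X = f imax.
Proof.
rewrite /expect (eq_big_nat _ _ (F2 := fun j => (f j - f j.-1) + p j *: f imin.-1)).
  by rewrite big_split /= telescope_sumr_pred ?imin_gt0 // -scaler_suml p_sum1 scale1r subrK.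
by move=> j /p_gt0 pj_gt0; rewrite scalerDr scalerA mulfV ?scale1r ?gt_eqF.
Qed.

Lemma variance_randomized_telescope_le : variance p imin imax X <=
  \sum_(imin <= j < imax.+1) dotv (f j - f j.-1) (f j - f j.-1) / p j.
Proof.
have expand (c : R) (u U : 'cV[R]_n) : c != 0 ->
    c * dotv (c^-1 *: u - U) (c^-1 *: u - U) = dotv u u / c - 2 * dotv u U + c * dotv U U.
  move=> c_neq0; rewrite !(dotvDl, dotvDr, dotvNl, dotvNr, dotvZl, dotvZr) (dotvC U u).
  by field.
set d := fun j => f j - f j.-1; set D := f imax - f imin.-1.
rewrite /variance expect_randomized_telescope.
rewrite (eq_big_nat _ _ (F2 := fun j =>
  dotv (d j) (d j) / p j - 2 * dotv (d j) D + p j * dotv D D)); last first.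
  move=> j /p_gt0 pj_gt0; rewrite sqr_normv.
  have -> : (p j)^-1 *: (f j - f j.-1) + f imin.-1 - f imax = (p j)^-1 *: d j - D.
    by rewrite /D opprB addrA.
  by rewrite expand ?gt_eqF.
rewrite !big_split /= sumrN -mulr_sumr -mulr_suml p_sum1 mul1r -dotv_suml.
rewrite telescope_sumr_pred ?imin_gt0 // -/D.
have := dotvv_ge0 D; lra.
Qed.

End RandomizedTelescope.

Theorem theorem3p2 (R : realType) (n : nat) (A : 'M[R]_n) (y : 'cV[R]_n)
    (imin imax : nat) (p : nat -> R) :
  spd A ->
  (1 <= imin)%N -> (imin < imax)%N -> (imax <= n)%N ->
  (forall j : nat, (imin <= j <= imax)%N -> 0 < p j) ->
  \sum_(imin <= j < imax.+1) p j = 1 ->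
  let kappa := cond2 A in
  let x := invmx A *m y in
  let rho := (Num.sqrt kappa - 1) / (Num.sqrt kappa + 1) in
  let Gamma := \sum_(imin <= j < imax.+1) rho ^+ (2 * j.-1) / p j in
  let X := tss A y p imin in
  expect p imin imax X = cg_iter A y imax /\
  variance p imin imax X <= 16 * kappa ^+ 2 * normv x ^+ 2 * Gamma.
Proof.
case: n A y => [|n] A y [trA A_pos] imin_gt0 lt_imin_imax le_imax_n p_gt0 p_sum1.
  by have := leq_trans lt_imin_imax le_imax_n.
have le_imin_imax := ltnW lt_imin_imax.
move=> kappa x rho Gamma X; split.
  exact: (expect_randomized_telescope (cg_iter A y) imin_gt0 le_imin_imax p_gt0 p_sum1).
apply: le_trans
  (variance_randomized_telescope_le (cg_iter A y) imin_gt0 le_imin_imax p_gt0 p_sum1) _.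
rewrite /Gamma mulr_sumr; apply: ler_sum_nat => -[|j] /andP[le_imin_j le_j_imax].
  by move: (leq_trans imin_gt0 le_imin_j).
have pj_gt0 : 0 < p j.+1 by rewrite p_gt0 // le_imin_j.
rewrite mulrA ler_pM2r ?invr_gt0 // sqr_normv mulrAC.
exact: cg_iter_succ_sub_le.
Qed.
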